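(* Let $U$ be an open subset of hyperbolic $3$-space $H^3$ on which the geodesic polar coordinates $(r,\theta,\phi)$, $r>0$, $\theta\in(0,\pi)$, are valid, so that $g_{H^3}=\mathrm{d}r^2+\sinh^2 r\,(\mathrm{d}\theta^2+\sin^2\theta\,\mathrm{d}\phi^2)$, and let $\Lambda:U\to(0,\infty)$ be a smooth function satisfying the Helmholtz equation $$\sinh^2 r\left(\partial_r^2\Lambda+2\coth r\,\partial_r\Lambda+\Lambda\right)+\partial_\theta^2\Lambda+\cot\theta\,\partial_\theta\Lambda+\frac{1}{\sin^2\theta}\partial_\phi^2\Lambda=0,$$ i.e. $\triangle_{H^3}\Lambda+\Lambda=0$. Define the $\mathfrak{su}(2)$-valued function $\Phi$ and $1$-form $\mathcal{A}$ on $U$ by $$\Phi=\frac{1}{2\Lambda}\left(\partial_r\Lambda\,\mathbf{i}+\frac{\partial_\theta\Lambda}{\sinh r}\,\mathbf{j}+\frac{\partial_\phi\Lambda}{\sinh r\sin\theta}\,\mathbf{k}\right),$$ $$\mathcal{A}=\frac{\mathbf{i}}{2}\left[\left(\cos\theta+\sin\theta\,\frac{\partial_\theta\Lambda}{\Lambda}\right)\mathrm{d}\phi-\frac{\partial_\phi\Lambda}{\Lambda\sin\theta}\,\mathrm{d}\theta\right]-\frac{\mathbf{j}}{2}\left[\left(\cosh r+\sinh r\,\frac{\partial_r\Lambda}{\Lambda}\right)\sin\theta\,\mathrm{d}\phi-\frac{\partial_\phi\Lambda}{\Lambda\sinh r\sin\theta}\,\mathrm{d}r\right]+\frac{\mathbf{k}}{2}\left[\left(\cosh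 r+\sinh r\,\frac{\partial_r\Lambda}{\Lambda}\right)\mathrm{d}\theta-\frac{\partial_\theta\Lambda}{\Lambda\sinh r}\,\mathrm{d}r\right].$$ Then $(\Phi,\mathcal{A})$ satisfies the Bogomolny equations $\mathrm{d}_{\mathcal{A}}\Phi=-\ast_{H^3}\mathcal{F}$ on $U$, where $\mathcal{F}$ is the curvature of $\mathcal{A}$.
   Context: $\mathfrak{su}(2)$ is identified with the imaginary quaternions, spanned by the unit quaternions $\mathbf{i},\mathbf{j},\mathbf{k}$ (with $\mathbf{i}\mathbf{j}=\mathbf{k}$ etc.). For an $\mathfrak{su}(2)$-valued $1$-form $\mathcal{A}$ and function $\Phi$: $\mathrm{d}_{\mathcal{A}}\Phi=\mathrm{d}\Phi+[\mathcal{A},\Phi]$ with $[X,Y]=XY-YX$ (quaternion product), and $\mathcal{F}=\mathrm{d}\mathcal{A}+\mathcal{A}\wedge\mathcal{A}$. $\ast_{H^3}$ is the Hodge star of $g_{H^3}$ with orientation given by the volume form $\sinh^2 r\sin\theta\,\mathrm{d}r\wedge\mathrm{d}\theta\wedge\mathrm{d}\phi$. *)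

From Stdlib Require Import Reals List.
From Coquelicot Require Import Coquelicot.
Open Scope R_scope.

Record quat := Quat { q0 : R; q1 : R; q2 : R; q3 : R }.

Definition qadd (x y : quat) : quat :=
  Quat (q0 x + q0 y) (q1 x + q1 y) (q2 x + q2 y) (q3 x + q3 y).
Definition qopp (x : quat) : quat := Quat (- q0 x) (- q1 x) (- q2 x) (- q3 x).
Definition qsub (x y : quat) : quat := qadd x (qopp y).
Definition qscal (a : R) (x : quat) : quat :=
  Quat (a * q0 x) (a * q1 x) (a * q2 x) (a * q3 x).
Definition qmul (x y : quat) : quat :=
  Quat (q0 x * q0 y - q1 x * q1 y - q2 x * q2 y - q3 x * q3 y)
       (q0 x * q1 y + q1 x * q0 y + q2 x * q3 y - q3 x * q2 y)
       (q0 x * q2 y - q1 x * q3 y + q2 x * q0 y + q3 x * q1 y)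
       (q0 x * q3 y + q1 x * q2 y - q2 x * q1 y + q3 x * q0 y).
Definition qi : quat := Quat 0 1 0 0.
Definition qj : quat := Quat 0 0 1 0.
Definition qk : quat := Quat 0 0 0 1.
Definition qbr (x y : quat) : quat := qsub (qmul x y) (qmul y x).

Inductive dir := Dr | Dth | Dph.

Definition pd (d : dir) (f : R -> R -> R -> R) : R -> R -> R -> R :=
  match d with
  | Dr  => fun r t p => Derive (fun x => f x t p) r
  | Dth => fun r t p => Derive (fun x => f r x p) t
  | Dph => fun r t p => Derive (fun x => f r t x) p
  end.

Definition ex_pd (d : dir) (f : R -> R -> R -> R) (r t p : R) : Prop :=
  match d with
  | Dr  => ex_derive (fun x => f x t p) r
  | Dth => ex_derive (fun x => f r x p) t
  | Dph => ex_derive (fun x => f r t x) p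
  end.

Definition uncurry3 (f : R -> R -> R -> R) : R * R * R -> R :=
  fun q => f (fst (fst q)) (snd (fst q)) (snd q).

Definition smooth_on (U : R -> R -> R -> Prop) (f : R -> R -> R -> R) : Prop :=
  forall (l : list dir) (r t p : R), U r t p ->
    let g := fold_right pd f l in
    continuous (uncurry3 g) (r, t, p) /\ (forall d, ex_pd d g r t p).

Definition open3 (U : R -> R -> R -> Prop) : Prop :=
  open (fun q : R * R * R => U (fst (fst q)) (snd (fst q)) (snd q)).

Definition pdQ (d : dir) (f : R -> R -> R -> quat) : R -> R -> R -> quat :=
  fun r t p =>
    Quat (pd d (fun a b c => q0 (f a b c)) r t p)
         (pd d (fun a b c => q1 (f a b c)) r t p)
         (pd d (fun a b c => q2 (f a b c)) r t p)
         (pd d (fun a b c => q3 (f a b c)) r t p).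

Definition coth (x : R) : R := cosh x / sinh x.
Definition cot (x : R) : R := cos x / sin x.

Definition helmholtz_at (L : R -> R -> R -> R) (r t p : R) : Prop :=
  (sinh r) ^ 2 * (pd Dr (pd Dr L) r t p + 2 * coth r * pd Dr L r t p + L r t p)
  + pd Dth (pd Dth L) r t p + cot t * pd Dth L r t p
  + / (sin t) ^ 2 * pd Dph (pd Dph L) r t p = 0.

Definition PhiL (L : R -> R -> R -> R) : R -> R -> R -> quat :=
  fun r t p =>
    qscal (/ (2 * L r t p))
      (qadd (qscal (pd Dr L r t p) qi)
        (qadd (qscal (pd Dth L r t p / sinh r) qj)
              (qscal (pd Dph L r t p / (sinh r * sin t)) qk))).

Definition AL (L : R -> R -> R -> R) (d : dir) : R -> R -> R -> quat :=
  fun r t p =>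
    let l := L r t p in
    let Lr := pd Dr L r t p in
    let Lt := pd Dth L r t p in
    let Lp := pd Dph L r t p in
    match d with
    | Dr =>
        qadd (qscal (- / 2) (qscal (- (Lp / (l * sinh r * sin t))) qj))
             (qscal (/ 2) (qscal (- (Lt / (l * sinh r))) qk))
    | Dth =>
        qadd (qscal (/ 2) (qscal (- (Lp / (l * sin t))) qi))
             (qscal (/ 2) (qscal (cosh r + sinh r * (Lr / l)) qk))
    | Dph =>
        qadd (qscal (/ 2) (qscal (cos t + sin t * (Lt / l)) qi))
             (qscal (- / 2) (qscal ((cosh r + sinh r * (Lr / l)) * sin t) qj))
    end.

Definition covd (A : dir -> R -> R -> R -> quat) (Phi : R -> R -> R -> quat)
  (d : dir) (r t p : R) : quat :=
  qadd (pdQ d Phi r t p) (qbr (A d r t p) (Phi r t p)).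

(* curvature F = dA + A /\ A, component F_{ab} (coefficient of dx^a /\ dx^b):
   F_ab = d_a A_b - d_b A_a + A_a A_b - A_b A_a *)
Definition curv (A : dir -> R -> R -> R -> quat) (a b : dir) (r t p : R) : quat :=
  qadd (qsub (pdQ a (A b) r t p) (pdQ b (A a) r t p))
       (qsub (qmul (A a r t p) (A b r t p)) (qmul (A b r t p) (A a r t p))).

Definition gH (d : dir) (r t p : R) : R :=
  match d with
  | Dr => 1
  | Dth => (sinh r) ^ 2
  | Dph => (sinh r) ^ 2 * (sin t) ^ 2
  end.

(* volume density sqrt(det g) = sinh^2 r sin theta (positive orientation
   dr /\ dtheta /\ dphi) *)
Definition volH (r t p : R) : R := (sinh r) ^ 2 * sin t.

(* Hodge star of a 2-form F (components F_ab) for the diagonal metric gH: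
   *(dx^b /\ dx^c) = sqrt(det g) g^{bb} g^{cc} dx^a for (a,b,c) a cyclic
   permutation of (r,theta,phi).  Returns the component along dx^a. *)
Definition hodge2 (F : dir -> dir -> R -> R -> R -> quat) (a : dir) (r t p : R) : quat :=
  let (b, c) := match a with
                | Dr => (Dth, Dph) | Dth => (Dph, Dr) | Dph => (Dr, Dth) end in
  qscal (volH r t p / (gH b r t p * gH c r t p)) (F b c r t p).

(* Every component of d_A Phi + *F is a rational function of the 2-jet of Lambda and of
   sinh r, cosh r, sin theta, cos theta.  Smoothness makes the mixed partials of Lambda
   symmetric (Schwarz); once they are identified and d_phi^2 Lambda is eliminated with the
   Helmholtz equation, each component vanishes identically modulo cosh^2 r = 1 + sinh^2 r. *)

From Stdlib Require Import Reals Lra List.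
From Coquelicot Require Import Coquelicot.
Import ListNotations.
Open Scope R_scope.

Lemma open3_cube U r t p : open3 U -> U r t p ->
  exists del : posreal, forall r' t' p',
    ball r del r' -> ball t del t' -> ball p del p' -> U r' t' p'.
Proof.
  intros HU Hx. destruct (HU (r, t, p) Hx) as [del Hdel].
  exists del. intros r' t' p' Hr Ht Hp. exact (Hdel (r', t', p') (conj (conj Hr Ht) Hp)).
Qed.

Lemma continuous_uncurry3_cube g r t p : continuous (uncurry3 g) (r, t, p) ->
  forall eps : posreal, exists del : posreal, forall r' t' p',
    ball r del r' -> ball t del t' -> ball p del p' -> ball (g r t p) eps (g r' t' p').
Proof.
  intros Hg eps. destruct (proj1 (filterlim_locally _ _) Hg eps) as [del Hdel].
  exists del. intros r' t' p' Hr Ht Hp. exact (Hdel (r', t', p') (conj (conj Hr Ht) Hp)).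
Qed.

Lemma smooth_on_cube U f r t p : open3 U -> smooth_on U f -> U r t p ->
  exists del : posreal, forall r' t' p',
    ball r del r' -> ball t del t' -> ball p del p' ->
    forall l d, ex_pd d (fold_right pd f l) r' t' p'.
Proof.
  intros HU Hf Hx. destruct (open3_cube U r t p HU Hx) as [del Hdel].
  exists del. intros r' t' p' Hr Ht Hp l d.
  exact (proj2 (Hf l r' t' p' (Hdel r' t' p' Hr Ht Hp)) d).
Qed.

Lemma smooth_on_pd_comm U f d d' r t p : open3 U -> smooth_on U f -> U r t p ->
  pd d (pd d' f) r t p = pd d' (pd d f) r t p.
Proof.
  intros HU Hf Hx.
  destruct (smooth_on_cube U f r t p HU Hf Hx) as [del Hex].
  pose proof (fun l => continuous_uncurry3_cube _ r t p (proj1 (Hf l r t p Hx))) as Hc.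
  assert (Hr := ball_center r del). assert (Ht := ball_center t del).
  assert (Hp := ball_center p del).
  assert (Hrt : pd Dr (pd Dth f) r t p = pd Dth (pd Dr f) r t p).
  { apply (Schwarz (fun u v => f u v p)).
    - exists del. intros u v Hu Hv. pose proof (Hex u v p Hu Hv Hp) as E.
      exact (conj (E [] Dr) (conj (E [] Dth) (conj (E [Dth] Dr) (E [Dr] Dth)))).
    - intro eps. destruct (Hc [Dr; Dth] eps) as [e He].
      exists e. intros u v Hu Hv. exact (He u v p Hu Hv (ball_center p e)).
    - intro eps. destruct (Hc [Dth; Dr] eps) as [e He].
      exists e. intros u v Hu Hv. exact (He u v p Hu Hv (ball_center p e)). }
  assert (Hrp : pd Dr (pd Dph f) r t p = pd Dph (pd Dr f) r t p).
  { apply (Schwarz (fun u v => f u t v)).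
    - exists del. intros u v Hu Hv. pose proof (Hex u t v Hu Ht Hv) as E.
      exact (conj (E [] Dr) (conj (E [] Dph) (conj (E [Dph] Dr) (E [Dr] Dph)))).
    - intro eps. destruct (Hc [Dr; Dph] eps) as [e He].
      exists e. intros u v Hu Hv. exact (He u t v Hu (ball_center t e) Hv).
    - intro eps. destruct (Hc [Dph; Dr] eps) as [e He].
      exists e. intros u v Hu Hv. exact (He u t v Hu (ball_center t e) Hv). }
  assert (Htp : pd Dth (pd Dph f) r t p = pd Dph (pd Dth f) r t p).
  { apply (Schwarz (fun u v => f r u v)).
    - exists del. intros u v Hu Hv. pose proof (Hex r u v Hr Hu Hv) as E.
      exact (conj (E [] Dth) (conj (E [] Dph) (conj (E [Dph] Dth) (E [Dth] Dph)))).
    - intro eps. destruct (Hc [Dth; Dph] eps) as [e He].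
      exists e. intros u v Hu Hv. exact (He r u v (ball_center r e) Hu Hv).
    - intro eps. destruct (Hc [Dph; Dth] eps) as [e He].
      exists e. intros u v Hu Hv. exact (He r u v (ball_center r e) Hu Hv). }
  destruct d, d'; congruence.
Qed.

Lemma cosh_sqr x : cosh x ^ 2 = 1 + sinh x ^ 2.
Proof.
  unfold cosh, sinh. rewrite exp_Ropp.
  assert (exp x <> 0) by (apply Rgt_not_eq, exp_pos). field; auto.
Qed.

Lemma helmholtz_at_pd_phi_phi L r t p : sinh r <> 0 -> sin t <> 0 -> helmholtz_at L r t p ->
  pd Dph (pd Dph L) r t p =
  - (sin t ^ 2 * (sinh r ^ 2 * (pd Dr (pd Dr L) r t p + L r t p)
      + 2 * sinh r * cosh r * pd Dr L r t p + pd Dth (pd Dth L) r t p)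
     + sin t * cos t * pd Dth L r t p).
Proof.
  intros Hsh Hs Hh. unfold helmholtz_at, coth, cot in Hh.
  apply (f_equal (Rmult (sin t ^ 2))) in Hh.
  field_simplify in Hh; [lra | auto].
Qed.

Lemma quat_eq a b c d a' b' c' d' : a = a' -> b = b' -> c = c' -> d = d' ->
  Quat a b c d = Quat a' b' c' d'.
Proof. intros; subst; reflexivity. Qed.

Lemma pd_is_derive d f r t p v :
  match d with
  | Dr => is_derive (fun x => f x t p) r v
  | Dth => is_derive (fun x => f r x p) t v
  | Dph => is_derive (fun x => f r t x) p v
  end -> pd d f r t p = v.
Proof. destruct d; apply is_derive_unique. Qed.

Ltac nonzero := repeat match goal with
  | |- _ /\ _ => split
  | |- True => exact I
  | |- _ * _ <> 0 => apply Rmult_integral_contrapositive_currified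
  | |- 2 <> 0 => lra
  | |- _ <> 0 => assumption
  end.

(* Expands [pd d f] by the chain rule unless [f] is [L] or one of its partials, which are
   kept as the jet of [L]. *)
Ltac chain_rule := match goal with
  | |- context [pd ?d ?f ?r ?t ?p] =>
      assert_fails (is_var f); lazymatch f with pd _ _ => fail | _ => idtac end;
      erewrite (pd_is_derive d f r t p);
      [| cbv beta iota; cbn [AL PhiL q0 q1 q2 q3 qadd qscal qopp qi qj qk]; auto_derive;
         [nonzero; assumption | reflexivity]]
  end.

Lemma bogomolny_at L r t p :
  (forall d, ex_pd d L r t p) -> (forall d d', ex_pd d (pd d' L) r t p) ->
  (forall d d', pd d (pd d' L) r t p = pd d' (pd d L) r t p) ->
  L r t p <> 0 -> sinh r <> 0 -> sin t <> 0 -> helmholtz_at L r t p ->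
  forall d, covd (AL L) (PhiL L) d r t p = qopp (hodge2 (curv (AL L)) d r t p).
Proof.
  intros HL1 HL2 Hcomm HL Hsh Hs Hh d.
  pose proof (Hcomm Dr Dth) as Srt. pose proof (Hcomm Dr Dph) as Srp.
  pose proof (Hcomm Dth Dph) as Stp. clear Hcomm.
  pose proof (helmholtz_at_pd_phi_phi L r t p Hsh Hs Hh) as Hpp.
  pose proof (cosh_sqr r) as Hch.
  pose proof (HL1 Dr). pose proof (HL1 Dth). pose proof (HL1 Dph).
  pose proof (HL2 Dr Dr). pose proof (HL2 Dr Dth). pose proof (HL2 Dr Dph).
  pose proof (HL2 Dth Dr). pose proof (HL2 Dth Dth). pose proof (HL2 Dth Dph).
  pose proof (HL2 Dph Dr). pose proof (HL2 Dph Dth). pose proof (HL2 Dph Dph).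
  cbn [ex_pd] in *.
  destruct d; unfold covd, hodge2, curv, pdQ, qbr, qsub; repeat chain_rule;
    apply quat_eq; cbn [PhiL AL q0 q1 q2 q3 qadd qscal qopp qi qj qk qmul gH]; unfold volH;
    cbn [pd] in *; rewrite ?Srt, ?Srp, ?Stp, ?Hpp;
    try (field_simplify_eq; [| nonzero]); rewrite ?Hch; ring.
Qed.

Theorem mainTheorem1 (U : R -> R -> R -> Prop) (L : R -> R -> R -> R) :
  open3 U ->
  (forall r t p, U r t p -> 0 < r /\ 0 < t < PI) ->
  smooth_on U L ->
  (forall r t p, U r t p -> 0 < L r t p) ->
  (forall r t p, U r t p -> helmholtz_at L r t p) ->
  forall (d : dir) (r t p : R), U r t p ->
    covd (AL L) (PhiL L) d r t p = qopp (hodge2 (curv (AL L)) d r t p).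
Proof.
  intros HU Hpos HS HLpos Hhelm d r t p Hx.
  destruct (Hpos r t p Hx) as [Hr [Ht0 HtPI]].
  assert (Hsh : 0 < sinh r) by (rewrite <- sinh_0; apply sinh_lt; exact Hr).
  assert (Hs : 0 < sin t) by (apply sin_gt_0; assumption).
  apply bogomolny_at.
  - exact (proj2 (HS [] r t p Hx)).
  - intros d0 d'. exact (proj2 (HS [d'] r t p Hx) d0).
  - intros d0 d'. exact (smooth_on_pd_comm U L d0 d' r t p HU HS Hx).
  - apply Rgt_not_eq, HLpos, Hx.
  - apply Rgt_not_eq, Hsh.
  - apply Rgt_not_eq, Hs.
  - exact (Hhelm r t p Hx).
Qed.
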